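(* Every signed $Z_4$-colourable graph is $\{1,1,2\}$-choosable.
   Context: A signed graph is a pair $(G,\sigma)$ with $\sigma:E(G)\to\{-1,+1\}$. A $Z_4$-colouring of $(G,\sigma)$ is a map $f:V(G)\to\mathbb Z_4$ such that $f(x)\ne\sigma(e)f(y)$ in $\mathbb Z_4$ for every edge $e=xy$. $G$ is signed $Z_4$-colourable if $(G,\sigma)$ has a $Z_4$-colouring for every signature $\sigma$. For a partition $\lambda=\{k_1,\dots,k_q\}$ of $k$, a $\lambda$-assignment of $G$ is an assignment $L$ with $|L(v)|=k$ for all $v$ such that $\bigcup_vL(v)$ can be partitioned into sets $C_1,\dots,C_q$ with $|L(v)\cap C_i|=k_i$ for all $v$ and $i$; $G$ is $\lambda$-choosable if for every $\lambda$-assignment $L$ there is a proper colouring $f$ with $f(v)\in L(v)$ for all $v$. *)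

From HB Require Import structures.
From mathcomp Require Import all_boot all_order all_algebra.
Set Implicit Arguments. Unset Strict Implicit. Unset Printing Implicit Defensive.
Import GRing.Theory.

(* A signature: sigma x y = true means the edge xy is negative (sign -1),
   false means positive (+1).  It must be symmetric so that each edge
   gets a single sign. *)
Definition signature (T : finType) (sigma : rel T) : Prop := symmetric sigma.

Definition Z4_colouring (T : finType) (e sigma : rel T) (f : T -> 'Z_4) : Prop :=
  forall x y, e x y -> f x != (if sigma x y then - f y else f y)%R.

Definition signed_Z4_colourable (T : finType) (e : rel T) : Prop :=
  forall sigma : rel T, signature sigma -> exists f : T -> 'Z_4, Z4_colouring e sigma f.

Definition lambda_assignment (T C : finType) (lambda : seq nat) (L : T -> {set C}) : Prop :=
  (forall v, #|L v| = sumn lambda) /\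
  exists P : 'I_(size lambda) -> {set C},
    [/\ (forall i j, i != j -> [disjoint P i & P j]),
        \bigcup_i P i = \bigcup_v L v &
        forall v i, #|L v :&: P i| = nth 0 lambda i].

Definition choosable (T : finType) (e : rel T) (lambda : seq nat) : Prop :=
  forall (C : finType) (L : T -> {set C}), lambda_assignment lambda L ->
    exists f : T -> C, (forall v, f v \in L v) /\ (forall x y, e x y -> f x != f y).

From mathcomp Require Import all_boot all_order all_algebra.
Import GRing.Theory.
Set Implicit Arguments. Unset Strict Implicit. Unset Printing Implicit Defensive.

(* Given a {1,1,2}-assignment, every list L v consists of one colour of the
   block P0, one of P1 and a pair from P2.  Encode these colours of L v by
   0, 2 and {1, 3} in Z_4, and make an edge xy negative exactly when the
   pairs of x and y share a colour that is encoded by 1 at one end and by 3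
   at the other.  A Z_4-colouring f of this signed graph is then decoded
   into an L-colouring: at each vertex v take the colour encoded by f v.
   Equal colours at the ends of an edge would force f x = sigma(xy) f y. *)

Lemma set2_card2 (C : finType) (A : {set C}) c d :
  #|A| = 2 -> c != d -> c \in A -> d \in A -> A = [set c; d].
Proof.
move=> A2 cd cA dA; apply/esym/eqP; rewrite eqEcard cards2 cd A2 andbT.
by apply/subsetP => z; rewrite !inE => /orP[]/eqP->.
Qed.

Definition picked (C : finType) (S : {set C}) (c : C) := [pick d in S] == Some c.

Lemma picked_card2 (C : finType) (S : {set C}) :
  #|S| = 2 -> exists l h, [/\ l \in S, h \in S, picked S l & ~~ picked S h].
Proof.
move/eqP/cards2P => [c [d [cd ->]]]; rewrite /picked.
case: pickP => [z|/(_ c)]; last by rewrite !inE eqxx.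
rewrite !inE => /orP[]/eqP->.
- by exists c, d; rewrite !inE !eqxx orbT /= -(inj_eq Some_inj) in cd *.
- by exists d, c; rewrite !inE !eqxx orbT /= eq_sym -(inj_eq Some_inj) in cd *.
Qed.

Section OneOneTwoAssignment.

Variables (T C : finType) (L : T -> {set C}) (P : 'I_3 -> {set C}).
Hypothesis P_disjoint : forall i j, i != j -> [disjoint P i & P j].
Hypothesis P_cover : \bigcup_i P i = \bigcup_v L v.
Hypothesis card_LP : forall v i, #|L v :&: P i| = nth 0 [:: 1; 1; 2] i.

Let P0 := P (@Ordinal 3 0 isT).
Let P1 := P (@Ordinal 3 1 isT).
Let P2 := P (@Ordinal 3 2 isT).

Definition pair_of v := L v :&: P2.

Definition code v c : 'Z_4 :=
  (if c \in P0 then 0 else if c \in P1 then 2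
   else if picked (pair_of v) c then 1 else 3)%R.

Definition sign_rel : rel T := fun x y =>
  [exists c, [&& c \in pair_of x, c \in pair_of y &
                 picked (pair_of x) c != picked (pair_of y) c]].

Lemma signature_sign_rel : signature sign_rel.
Proof.
by move=> x y; apply/existsP/existsP => -[c /and3P[cx cy d]];
  exists c; rewrite cx cy eq_sym.
Qed.

Lemma notin_block i j c : i != j -> c \in P i -> c \notin P j.
Proof. by move=> ij ci; rewrite (disjointFr (P_disjoint ij) ci). Qed.

Lemma card_pair_of v : #|pair_of v| = 2.
Proof. exact: card_LP. Qed.

Lemma mem_pair_of v c :
  c \in L v -> c \notin P0 -> c \notin P1 -> c \in pair_of v.
Proof.
move=> cL c0 c1; have : c \in \bigcup_i P i by rewrite P_cover; apply/bigcupP; exists v.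
case/bigcupP => -[[|[|[|//]]] i3] _; rewrite (bool_irrelevance i3 isT) => ci.
- by case/negP: c0.
- by case/negP: c1.
- by rewrite inE cL.
Qed.

Lemma code_surj v z : exists2 c, c \in L v & code v c = z.
Proof.
have [a /setP/(_ a)] : exists a, L v :&: P0 = [set a] by apply/cards1P/eqP/card_LP.
have [b /setP/(_ b)] : exists b, L v :&: P1 = [set b] by apply/cards1P/eqP/card_LP.
rewrite !inE !eqxx => /andP[bL b1] /andP[aL a0].
have [l [h [lS hS lfirst hnot]]] := picked_card2 (card_pair_of v).
have notP01 c : c \in pair_of v -> (c \in P0) = false /\ (c \in P1) = false.
  by rewrite inE => /andP[_ c2]; split; apply/negbTE/(notin_block _ c2).
have [[l0 l1] [h0 h1]] := (notP01 _ lS, notP01 _ hS).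
move: lS hS; rewrite !inE => /andP[lL _] /andP[hL _].
have b0 : (b \in P0) = false by apply/negbTE/(notin_block _ b1).
rewrite /code; case: z => -[|[|[|[|//]]]] z4.
- by exists a; rewrite // a0; apply: val_inj.
- by exists l; rewrite // l0 l1 lfirst; apply: val_inj.
- by exists b; rewrite // b0 b1; apply: val_inj.
- by exists h; rewrite // h0 h1 (negbTE hnot); apply: val_inj.
Qed.

Lemma sign_relE x y c : c \in pair_of x -> c \in pair_of y ->
  sign_rel x y = (picked (pair_of x) c != picked (pair_of y) c).
Proof.
move=> cx cy; apply/existsP/idP => [[d /and3P[dx dy]]|]; last by exists c; rewrite cx cy.
have [<- //|cd] := eqVneq c d.
by rewrite (set2_card2 (card_pair_of x) cd cx dx) (set2_card2 (card_pair_of y) cd cy dy) eqxx.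
Qed.

Lemma code_shared x y c : c \in L x -> c \in L y ->
  code x c = (if sign_rel x y then - code y c else code y c)%R.
Proof.
move=> cLx cLy; rewrite /code.
have [c0|c0] := boolP (c \in P0); first by rewrite oppr0 if_same.
have [c1|c1] := boolP (c \in P1); first by case: (sign_rel x y) => //; apply: val_inj.
have [cx cy] := (mem_pair_of cLx c0 c1, mem_pair_of cLy c0 c1).
by rewrite (sign_relE cx cy); case: (picked (pair_of x) c); case: (picked (pair_of y) c) => //; apply: val_inj.
Qed.

End OneOneTwoAssignment.

Theorem theorem12 (T : finType) (e : rel T) :
  symmetric e -> irreflexive e ->
  signed_Z4_colourable e -> choosable e [:: 1; 1; 2].
Proof.
move=> _ _ colZ4 C L [_ [P [P_disjoint P_cover card_LP]]].
have [f f_col] := colZ4 _ (signature_sign_rel L P).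
have [g gL g_code] := fin_all_exists2 (fun v => code_surj P_disjoint card_LP v (f v)).
exists g; split=> // x y xy; apply: contra (f_col x y xy) => /eqP gxy.
have gLy : g x \in L y by rewrite gxy.
by rewrite -g_code -(g_code y) -gxy (code_shared P_cover card_LP (gL x) gLy).
Qed.
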